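(* Let $V$ be a commutative unital quantale whose underlying lattice is a frame. Let $(X,a,+)$ be a $V$-group, $Y$ a group, and $f\colon X\to Y$ a surjective group homomorphism. Define $b\colon Y\times Y\to V$ by $b(y_1,y_2)=\bigvee\{a(x_1,x_2)\mid x_1,x_2\in X,\ f(x_1)=y_1,\ f(x_2)=y_2\}$. Then $(Y,b,+)$ is a $V$-group and $f\colon(X,a,+)\to(Y,b,+)$ is a $V$-homomorphism.
   Context: A commutative unital quantale $V$ is a complete lattice with a commutative associative operation $\otimes$ with unit $k$ preserving arbitrary joins in each variable. A $V$-category $(X,a)$: $a\colon X\times X\to V$ with $k\le a(x,x)$ and $a(x,x')\otimes a(x',x'')\le a(x,x'')$. A $V$-group $(X,a,+)$ is a $V$-category with a group structure (additive, not necessarily abelian) such that $a(x_1,x_2)\otimes a(x_1',x_2')\le a(x_1+x_1',x_2+x_2')$. A $V$-homomorphism is a group homomorphism $f$ with $a(x,x')\le b(f(x),f(x'))$. *)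

Set Implicit Arguments.

Record CompleteLattice := {
  cl_car :> Type;
  cl_le : cl_car -> cl_car -> Prop;
  cl_le_refl : forall x, cl_le x x;
  cl_le_trans : forall x y z, cl_le x y -> cl_le y z -> cl_le x z;
  cl_le_antisym : forall x y, cl_le x y -> cl_le y x -> x = y;
  cl_sup : (cl_car -> Prop) -> cl_car;
  cl_sup_ub : forall (S : cl_car -> Prop) x, S x -> cl_le x (cl_sup S);
  cl_sup_least : forall (S : cl_car -> Prop) y,
      (forall x, S x -> cl_le x y) -> cl_le (cl_sup S) y
}.

Arguments cl_le {c} _ _.
Arguments cl_sup {c} _.

Definition cl_meet (L : CompleteLattice) (x y : L) : L :=
  cl_sup (fun z => cl_le z x /\ cl_le z y).

Arguments cl_meet {L} _ _.

Definition is_frame (L : CompleteLattice) : Prop :=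
  forall (x : L) (S : L -> Prop),
    cl_meet x (cl_sup S) = cl_sup (fun z => exists s, S s /\ z = cl_meet x s).

Record Quantale := {
  q_lat :> CompleteLattice;
  q_tensor : q_lat -> q_lat -> q_lat;
  q_unit : q_lat;
  q_assoc : forall u v w, q_tensor u (q_tensor v w) = q_tensor (q_tensor u v) w;
  q_comm : forall u v, q_tensor u v = q_tensor v u;
  q_unit_l : forall u, q_tensor q_unit u = u;
  (* preserves arbitrary joins in the second variable (hence in both, by commutativity) *)
  q_tensor_sup : forall u (S : q_lat -> Prop),
      q_tensor u (cl_sup S) = cl_sup (fun z => exists s, S s /\ z = q_tensor u s)
}.

Arguments q_tensor {q} _ _.
Arguments q_unit {q}.

Definition is_VCat (V : Quantale) (X : Type) (a : X -> X -> V) : Prop :=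
  (forall x, cl_le (@q_unit V) (a x x)) /\
  (forall x x' x'', cl_le (q_tensor (a x x') (a x' x'')) (a x x'')).

Definition is_group (G : Type) (add : G -> G -> G) (zero : G) (opp : G -> G) : Prop :=
  (forall x y z, add x (add y z) = add (add x y) z) /\
  (forall x, add zero x = x) /\ (forall x, add x zero = x) /\
  (forall x, add (opp x) x = zero) /\ (forall x, add x (opp x) = zero).

Arguments is_VCat {V X} _.

Definition is_VGroup (V : Quantale) (X : Type) (a : X -> X -> V)
    (add : X -> X -> X) (zero : X) (opp : X -> X) : Prop :=
  is_VCat a /\ is_group add zero opp /\
  (forall x1 x2 x1' x2',
      cl_le (q_tensor (a x1 x2) (a x1' x2')) (a (add x1 x1') (add x2 x2'))).

Arguments is_VGroup {V X} _ _ _ _.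

Definition is_group_hom (X Y : Type) (addX : X -> X -> X) (addY : Y -> Y -> Y)
    (f : X -> Y) : Prop :=
  forall x x', f (addX x x') = addY (f x) (f x').

Arguments is_group_hom {X Y} _ _ _.
Arguments is_group {G} _ _ _.

Definition is_VHom (V : Quantale) (X Y : Type) (a : X -> X -> V) (b : Y -> Y -> V)
    (addX : X -> X -> X) (addY : Y -> Y -> Y) (f : X -> Y) : Prop :=
  is_group_hom addX addY f /\ (forall x x', cl_le (a x x') (b (f x) (f x'))).

Arguments is_VHom {V X Y} _ _ _ _ _.

Definition induced_struct (V : Quantale) (X Y : Type) (a : X -> X -> V)
    (f : X -> Y) (y1 y2 : Y) : V :=
  cl_sup (fun v => exists x1 x2, f x1 = y1 /\ f x2 = y2 /\ v = a x1 x2).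

Arguments induced_struct {V X Y} _ _ _ _.

(* The structure b is the largest one making f a V-functor, so f is a
   V-homomorphism by construction, and every axiom for b reduces to the
   corresponding axiom for a on representatives of the fibres. Reflexivity
   needs surjectivity; compatibility with + is immediate since f is a
   homomorphism. For transitivity, representatives (x1, x2) of (y, y') and
   (x3, x4) of (y', y'') need not share a middle point, but translating the
   second pair by d = x2 - x3 moves x3 onto x2 without leaving the fibres and
   without decreasing a, as a is invariant under translation (k <= a(d, d)). *)


Set Implicit Arguments.

Section QuantaleFacts.

Variable V : Quantale.

Lemma cl_sup_pair_r (u v : V) :
  cl_le u v -> cl_sup (fun z : V => z = u \/ z = v) = v.
Proof.
  intros Huv. apply cl_le_antisym.
  - apply cl_sup_least. intros z [-> | ->]; [exact Huv | apply cl_le_refl].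
  - apply cl_sup_ub. right; reflexivity.
Qed.

Lemma q_tensor_mono_r (w u v : V) :
  cl_le u v -> cl_le (q_tensor w u) (q_tensor w v).
Proof.
  intros Huv. rewrite <- (cl_sup_pair_r _ _ Huv), q_tensor_sup.
  apply cl_sup_ub. exists u; split; [left | ]; reflexivity.
Qed.

Lemma q_tensor_sup_le (S T : V -> Prop) (c : V) :
  (forall s t, S s -> T t -> cl_le (q_tensor s t) c) ->
  cl_le (q_tensor (cl_sup S) (cl_sup T)) c.
Proof.
  intros H. rewrite q_tensor_sup. apply cl_sup_least.
  intros z [t [Ht ->]]. rewrite q_comm, q_tensor_sup. apply cl_sup_least.
  intros z [s [Hs ->]]. rewrite q_comm. apply H; assumption.
Qed.

End QuantaleFacts.

Section GroupFacts.

Variables (X Y : Type) (addX : X -> X -> X) (zeroX : X) (oppX : X -> X).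
Variable addY : Y -> Y -> Y.
Variable f : X -> Y.
Hypothesis HX : is_group addX zeroX oppX.
Hypothesis Hf : is_group_hom addX addY f.

Lemma addrNK (x x' : X) : addX (addX x (oppX x')) x' = x.
Proof.
  destruct HX as [Hassoc [_ [Hr [Hl_inv _]]]].
  rewrite <- Hassoc, Hl_inv, Hr. reflexivity.
Qed.

Lemma hom_translate_fibre (x2 x3 x4 : X) :
  f x2 = f x3 -> f (addX (addX x2 (oppX x3)) x4) = f x4.
Proof.
  destruct HX as [_ [Hl [_ [_ Hr_inv]]]].
  intros E. rewrite !Hf, E, <- Hf, Hr_inv, <- Hf, Hl. reflexivity.
Qed.

End GroupFacts.

Section VGroupFacts.

Variables (V : Quantale) (X : Type) (a : X -> X -> V).
Variables (addX : X -> X -> X) (zeroX : X) (oppX : X -> X).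
Hypothesis Ha : is_VGroup a addX zeroX oppX.

Lemma VGroup_translate_l (d x x' : X) :
  cl_le (a x x') (a (addX d x) (addX d x')).
Proof.
  destruct Ha as [[Hrefl _] [_ Hcomp]].
  rewrite <- (q_unit_l V (a x x')).
  eapply cl_le_trans; [ | apply Hcomp].
  rewrite (q_comm V q_unit), (q_comm V (a d d)).
  apply q_tensor_mono_r, Hrefl.
Qed.

End VGroupFacts.

Section InducedStructure.

Variables (V : Quantale) (X Y : Type) (a : X -> X -> V) (f : X -> Y).

Lemma induced_struct_ub (x x' : X) :
  cl_le (a x x') (induced_struct a f (f x) (f x')).
Proof. apply cl_sup_ub. exists x, x'; auto. Qed.

Lemma induced_struct_refl :
  (forall y, exists x, f x = y) ->
  (forall x, cl_le q_unit (a x x)) ->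
  forall y, cl_le q_unit (induced_struct a f y y).
Proof.
  intros Hsurj Hrefl y. destruct (Hsurj y) as [x <-].
  eapply cl_le_trans; [apply Hrefl | apply induced_struct_ub].
Qed.

Variables (addX : X -> X -> X) (zeroX : X) (oppX : X -> X).
Variable addY : Y -> Y -> Y.
Hypothesis Ha : is_VGroup a addX zeroX oppX.
Hypothesis Hf : is_group_hom addX addY f.

Lemma induced_struct_trans (y y' y'' : Y) :
  cl_le (q_tensor (induced_struct a f y y') (induced_struct a f y' y''))
        (induced_struct a f y y'').
Proof.
  destruct Ha as [[_ Htrans] [HX _]].
  apply q_tensor_sup_le.
  intros s t [x1 [x2 [<- [E2 ->]]]] [x3 [x4 [E3 [<- ->]]]].
  set (d := addX x2 (oppX x3)).
  assert (Hshift : cl_le (a x3 x4) (a x2 (addX d x4))).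
  { rewrite <- (addrNK HX x2 x3). apply (VGroup_translate_l Ha). }
  rewrite <- (hom_translate_fibre HX Hf x2 x3 x4 (eq_trans E2 (eq_sym E3))).
  eapply cl_le_trans; [apply q_tensor_mono_r, Hshift | ].
  eapply cl_le_trans; [apply Htrans | apply induced_struct_ub].
Qed.

Lemma induced_struct_add (y1 y2 y1' y2' : Y) :
  cl_le (q_tensor (induced_struct a f y1 y2) (induced_struct a f y1' y2'))
        (induced_struct a f (addY y1 y1') (addY y2 y2')).
Proof.
  destruct Ha as [_ [_ Hcomp]].
  apply q_tensor_sup_le.
  intros s t [x1 [x2 [<- [<- ->]]]] [x3 [x4 [<- [<- ->]]]].
  rewrite <- !Hf. eapply cl_le_trans; [apply Hcomp | apply induced_struct_ub].
Qed.

End InducedStructure.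

Theorem proposition3p7 (V : Quantale) (X Y : Type) (a : X -> X -> V)
    (addX : X -> X -> X) (zeroX : X) (oppX : X -> X)
    (addY : Y -> Y -> Y) (zeroY : Y) (oppY : Y -> Y) (f : X -> Y) :
  is_frame V ->
  is_VGroup a addX zeroX oppX ->
  is_group addY zeroY oppY ->
  is_group_hom addX addY f ->
  (forall y, exists x, f x = y) ->
  is_VGroup (induced_struct a f) addY zeroY oppY /\
  is_VHom a (induced_struct a f) addX addY f.
Proof.
  intros _ Ha HY Hf Hsurj.
  split; [ | split; [exact Hf | apply induced_struct_ub]].
  split; [split | split; [exact HY | ]].
  - apply induced_struct_refl; [exact Hsurj | exact (proj1 (proj1 Ha))].
  - apply (induced_struct_trans Ha Hf).
  - apply (induced_struct_add Ha Hf).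
Qed.
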